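(* Let $A$ be a finite alphabet, $x\in A^{\mathcal{T}}$ a configuration, and let $y\in (A\times A)^{\mathcal{T}}$ be a dyadic encoding of $x$. Let $n\ge 0$, let $p:\mathbb{U}_n\to A$ be a pattern, and let $\widetilde{p}$ be the set of all maps $\mathbb{L}_n\to A$ of the form $h\mapsto \pi_2(y')_h$, where $y'$ ranges over dyadic encodings of configurations $x'$ with $x'_h=p_h$ for all $h\in\mathbb{U}_n$. Then for every tile $g$: the pattern $p$ appears in $x$ at position $g$ (i.e. $x_{g\cdot h}=p_h$ for all $h\in\mathbb{U}_n$) if and only if the map $h\mapsto \pi_2(y)_{g\cdot h}$, $h\in\mathbb{L}_n$, belongs to $\widetilde{p}$.
   Context: A $2$-fold horocyclic tessellation $\mathcal{T}$ of $\mathbb{H}^2$ (upper half-plane model) is a tiling arranged in horizontal rows; each row is a bi-infinite sequence of tiles, each tile sits above exactly two tiles of the row immediately below (its bottom-left and bottom-right children), and the row below consists exactly of the children of the tiles of the row above, in the induced order. One such tessellation is fixed. Tiles are named by words over $\{\alpha,\alpha^{-1},\beta,\beta^{-1}\}$: a fixed tile is $\varepsilon$; if a tile is $g$, then $g\cdot\beta$ is its right neighbour in its row, $g\cdot\alpha$ its bottom-left child and $g\cdot\alpha\cdot\beta$ its bottom-right child, with $\alpha\alpha^{-1}=\beta\beta^{-1}=\varepsilon$ and $\alpha\beta^2=\beta\alpha$. Configurations are maps $\mathcal{T}\to A$. Supports: $\mathbb{U}_n=\{\alpha^k\beta^q: 0\le k\le n-1,\ 0\le q\le 2^k-1\}$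 and $\mathbb{L}_n=\{\alpha^{n+1}\beta^q: 0\le q\le 2^{n+1}-1\}$; a pattern of size $n$ is a map $\mathbb{U}_n\to A$. For $z\in(A\times A)^{\mathcal{T}}$, $\pi_1(z),\pi_2(z)\in A^{\mathcal{T}}$ denote its first and second coordinates. A dyadic encoding of $x\in A^{\mathcal{T}}$ is a configuration $y\in(A\times A)^{\mathcal{T}}$ such that $\pi_1(y)=x$ and, for every tile $g$, $\pi_2(y)_{g\alpha}=x_g$ and $\pi_2(y)_{g\alpha\beta}=\pi_2(y)_g$ (it is unique unless the tessellation has a vertical fracture line, in which case one undetermined symbol propagates along it). *)

From Stdlib Require Import ZArith.
From mathcomp Require Import all_boot.

(* A 2-fold horocyclic tessellation, combinatorially.
   Rows are indexed by a level l : Z (increasing downwards), tiles in a row by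
   a position i : Z (increasing to the right).  Since each row below consists
   exactly of the children of the row above, in the induced order, and each
   tile has exactly two (consecutive) children, there is an offset s l : Z such
   that the children of tile (l,i) are (l+1, 2i + s l) (bottom-left) and
   (l+1, 2i + s l + 1) (bottom-right).  Every tessellation is thus described
   (up to isomorphism) by some s : Z -> Z, with the distinguished tile
   epsilon placed at (0,0). *)
Definition tile : Type := (Z * Z)%type.

Definition eps : tile := (0%Z, 0%Z).

Definition beta (g : tile) : tile := (fst g, (snd g + 1)%Z).

Definition alpha (s : Z -> Z) (g : tile) : tile :=
  ((fst g + 1)%Z, (2 * snd g + s (fst g))%Z).

(* g . (alpha^k beta^q) *)
Definition act (s : Z -> Z) (g : tile) (k q : nat) : tile :=
  Nat.iter q beta (Nat.iter k (alpha s) g).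

(* alpha^k beta^q is in U_n *)
Definition inU (n k q : nat) : Prop := (k < n)%coq_nat /\ (q < 2 ^ k)%coq_nat.

(* alpha^(n+1) beta^q is in L_n *)
Definition inL (n q : nat) : Prop := (q < 2 ^ (n + 1))%coq_nat.

Definition dyadic_encoding {A : Type} (s : Z -> Z) (x : tile -> A)
    (y : tile -> (A * A)%type) : Prop :=
  (forall g, fst (y g) = x g) /\
  (forall g, snd (y (alpha s g)) = x g) /\
  (forall g, snd (y (beta (alpha s g))) = snd (y g)).

(* A pattern of size n: only its values on U_n matter. *)
Definition appears {A : Type} (s : Z -> Z) (n : nat) (p : nat -> nat -> A)
    (x : tile -> A) (g : tile) : Prop :=
  forall k q, inU n k q -> x (act s g k q) = p k q.

Definition in_ptilde {A : Type} (s : Z -> Z) (n : nat) (p : nat -> nat -> A)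
    (f : nat -> A) : Prop :=
  exists (x' : tile -> A) (y' : tile -> (A * A)%type),
    dyadic_encoding s x' y' /\ appears s n p x' eps /\
    (forall q, inL n q -> snd (y' (act s eps (n + 1) q)) = f q).

(* Along a dyadic encoding, the second coordinate of a left child is the first
   coordinate of its parent, and that of a right child is copied from its parent.
   Hence x at g·α^k β^q reappears as π2(y) at g·α^(k+1) β^(2q), and, going down
   through rightmost children, at a tile of g·L_n: the pattern at g is read off
   the L_n-window of π2(y).  Conversely, the cone below g (the pattern together
   with that window) can be transplanted below ε: fill every row with the
   translated values of x, and define π2 row by row from the row above, starting
   from a constant row at level 0. *)

From Stdlib Require Import ZArith Lia.
From mathcomp Require Import all_boot zify.

Lemma alpha_beta s h : alpha s (beta h) = beta (beta (alpha s h)).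
Proof. by case: h => l i; rewrite /alpha /beta; cbn [fst snd]; f_equal; lia. Qed.

Lemma act_alpha s g m r : alpha s (act s g m r) = act s g m.+1 r.*2.
Proof.
rewrite /act /=; elim: r => [//|r IH].
by rewrite doubleS /= alpha_beta IH.
Qed.

Lemma act_beta s g m r : beta (act s g m r) = act s g m r.+1.
Proof. by []. Qed.

Definition row_origin (s : Z -> Z) (m : nat) : Z := snd (Nat.iter m (alpha s) eps).

Lemma act_eps s m r : act s eps m r = (Z.of_nat m, (row_origin s m + Z.of_nat r)%Z).
Proof.
have row_m : fst (Nat.iter m (alpha s) eps) = Z.of_nat m.
  by elim: m => [//|m IH] /=; rewrite IH; lia.
rewrite /act /row_origin; elim: r => [|r IH] /=.
  by case: (Nat.iter m (alpha s) eps) row_m => l i /= ->; f_equal; lia.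
by rewrite IH /beta /=; f_equal; lia.
Qed.

Definition rightmost_descendant (j r : nat) : nat := (2 ^ j * r.+1).-1.

Lemma rightmost_descendant_lt j r m :
  r < 2 ^ m -> rightmost_descendant j r < 2 ^ (m + j).
Proof.
move=> lt_r; rewrite /rightmost_descendant expnD.
have pos_j : 0 < 2 ^ j by rewrite expn_gt0.
have : 2 ^ j * r.+1 <= 2 ^ m * 2 ^ j by rewrite mulnC leq_mul2r lt_r orbT.
lia.
Qed.

Section DyadicEncoding.
Context {s : Z -> Z} {A : Type} {x : tile -> A} {y : tile -> (A * A)%type}.
Hypothesis enc : dyadic_encoding s x y.

Lemma snd_encoding_left g m r : snd (y (act s g m.+1 r.*2)) = x (act s g m r).
Proof. by case: enc => _ [left_child _]; rewrite -act_alpha left_child. Qed.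

Lemma snd_encoding_right g m r :
  snd (y (act s g m.+1 r.*2.+1)) = snd (y (act s g m r)).
Proof. by case: enc => _ [_ right_child]; rewrite -act_beta -act_alpha right_child. Qed.

Lemma snd_encoding_rightmost_descendant g m j r :
  snd (y (act s g (m + j) (rightmost_descendant j r))) = snd (y (act s g m r)).
Proof.
elim: j => [|j IH]; first by rewrite addn0 /rightmost_descendant mul1n.
have pos_j : 0 < 2 ^ j by rewrite expn_gt0.
have -> : rightmost_descendant j.+1 r = (rightmost_descendant j r).*2.+1.
  rewrite /rightmost_descendant expnS; lia.
by rewrite addnS snd_encoding_right.
Qed.

Lemma encoding_reads_cone g n k q :
  k <= n ->
  x (act s g k q) =
  snd (y (act s g (n + 1) (rightmost_descendant (n - k) q.*2))).
Proof.
move=> le_kn; have -> : n + 1 = k.+1 + (n - k) by lia.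
by rewrite snd_encoding_rightmost_descendant snd_encoding_left.
Qed.

End DyadicEncoding.

Section RowFilling.
Variables (s : Z -> Z) (A : Type) (c0 : A) (v : nat -> Z -> A).

(* [fill_row m j] is π2 at tile (m, j): rows at level <= 0 are constant [c0],
   and row [m] of the encoded configuration is [v m].  The parent of (m+1, j)
   is (m, d / 2) with d = j - s m; the parity of d tells which child it is. *)
Fixpoint fill_row (m : nat) (j : Z) : A :=
  match m with
  | O => c0
  | m'.+1 => let d := (j - s (Z.of_nat m'))%Z in
             if Z.odd d then fill_row m' (d / 2) else v m' (d / 2)
  end.

Definition fill (t : tile) : A := fill_row (Z.to_nat (fst t)) (snd t).

Lemma b2z_double_odd_div (b : bool) (i : Z) :
  Z.odd (Z.b2z b + 2 * i) = b /\ ((Z.b2z b + 2 * i) / 2)%Z = i.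
Proof. by split; [rewrite Z.odd_add_mul_2; case: b | apply: Z.add_b2z_double_div2]. Qed.

Lemma fill_alpha m i : fill (alpha s (Z.of_nat m, i)) = v m i.
Proof.
rewrite /fill /alpha /=.
have -> : Z.to_nat (Z.of_nat m + 1) = m.+1 by lia.
rewrite /= (_ : (2 * i + s (Z.of_nat m) - s (Z.of_nat m))%Z = (Z.b2z false + 2 * i)%Z);
  last by lia.
by have [-> ->] := b2z_double_odd_div false i.
Qed.

Lemma fill_right_child h : fill (beta (alpha s h)) = fill h.
Proof.
case: h => l i; rewrite /fill /alpha /beta /=.
case: (Z_lt_le_dec l 0) => [neg_l | nneg_l].
  have -> : Z.to_nat (l + 1) = 0%N by lia.
  by have -> : Z.to_nat l = 0%N by lia.
rewrite (_ : Z.to_nat (l + 1) = (Z.to_nat l).+1) /=; last by lia.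
rewrite Z2Nat.id // (_ : (2 * i + s l + 1 - s l)%Z = (Z.b2z true + 2 * i)%Z);
  last by lia.
by have [-> ->] := b2z_double_odd_div true i.
Qed.

Lemma fill_dyadic_encoding :
  dyadic_encoding s (fun h => fill (alpha s h)) (fun h => (fill (alpha s h), fill h)).
Proof. by split=> //; split=> // h; apply: fill_right_child. Qed.

End RowFilling.

Lemma cone_transplant {s : Z -> Z} {A : Type} {x : tile -> A}
    {y : tile -> (A * A)%type} g :
  dyadic_encoding s x y ->
  exists (x' : tile -> A) (y' : tile -> (A * A)%type),
    [/\ dyadic_encoding s x' y',
        forall m r, x' (act s eps m r) = x (act s g m r) &
        forall m r, r < 2 ^ m -> snd (y' (act s eps m r)) = snd (y (act s g m r))].
Proof.
move=> enc.
pose v m i := x (act s g m (Z.to_nat (i - row_origin s m))).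
pose z := fill s A (snd (y g)) v.
have z_left m r : z (act s eps m.+1 r.*2) = x (act s g m r).
  by rewrite -act_alpha act_eps /z fill_alpha /v; do 2 f_equal; lia.
have z_right m r : z (act s eps m.+1 r.*2.+1) = z (act s eps m r).
  by rewrite -act_beta -act_alpha /z fill_right_child.
have z_cone m r : r < 2 ^ m -> z (act s eps m r) = snd (y (act s g m r)).
  elim: m r => [r|m IH r]; first by rewrite expn0 ltnS leqn0 => /eqP ->.
  rewrite expnS -(odd_double_half r).
  case: (odd r) => /= lt_r; rewrite ?add1n ?add0n in lt_r *.
    by rewrite z_right (snd_encoding_right enc); apply: IH; lia.
  by rewrite z_left (snd_encoding_left enc).
exists (fun h => z (alpha s h)), (fun h => (z (alpha s h), z h)).
split=> [|m r|m r]; first exact: fill_dyadic_encoding.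
  by rewrite act_alpha z_left.
exact: z_cone.
Qed.

Theorem proposition1 (s : Z -> Z) (A : finType) (x : tile -> A)
    (y : tile -> (A * A)%type) (n : nat) (p : nat -> nat -> A) (g : tile) :
  dyadic_encoding s x y ->
  (appears s n p x g <->
   in_ptilde s n p (fun q => snd (y (act s g (n + 1) q)))).
Proof.
move=> enc; split.
- have [x' [y' [enc' x'_eq y'_eq]]] := cone_transplant g enc.
  move=> p_at_g; exists x', y'; split; [exact: enc' | split].
    by move=> k q U_kq; rewrite x'_eq; apply: p_at_g.
  by move=> q /ltP L_q; apply: y'_eq.
- case=> [x' [y' [enc' [p_at_eps y'_eq]]]] k q [/ltP lt_kn /ltP lt_q].
  have le_kn : k <= n by apply: ltnW.
  have L_q : inL n (rightmost_descendant (n - k) q.*2).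
    apply/ltP; rewrite (_ : n + 1 = k.+1 + (n - k)); last by lia.
    by apply: rightmost_descendant_lt; rewrite expnS -muln2 mulnC ltn_pmul2l.
  rewrite (encoding_reads_cone enc g _ _ q le_kn) -(y'_eq _ L_q).
  rewrite -(encoding_reads_cone enc' eps _ _ q le_kn).
  by apply: p_at_eps; split; apply/ltP.
Qed.
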